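(* Let $\mathcal{R}$ be a right amenable cell space with finite stabiliser $G_0$, let $(\mathcal{R},Q,N,\delta)$ be a semi-cellular automaton with $Q$ finite and nonempty and $N$ finite, with global transition function $\Delta$, and let $\mathcal{F}=(F_i)_{i\in I}$ be a right Følner net in $\mathcal{R}$. Then for every subset $X\subseteq Q^M$ we have $\mathrm{h}_{\mathcal{F}}(\Delta(X))\leq\mathrm{h}_{\mathcal{F}}(X)$.
   Context: A cell space $\mathcal{R}$ consists of a group $G$ acting transitively on the left on a nonempty set $M$ via $\triangleright$, a point $m_0\in M$ and a family $(g_{m_0,m})_{m\in M}$ in $G$ with $g_{m_0,m}\triangleright m_0=m$. $G_0$ is the stabiliser of $m_0$, $G/G_0$ the set of left cosets, with $G$ acting by $g\cdot hG_0=ghG_0$. The right semi-action $\triangleleft\colon M\times G/G_0\to M$ is $m\triangleleft gG_0=g_{m_0,m}g\triangleright m_0$. $\mathcal{R}$ is right amenable if there is a finitely additive probability measure $\mu$ on the power set of $M$ such that $\mu(\{a\triangleleft\mathfrak{g}:a\in A\})=\mu(A)$ whenever $\mathfrak{g}\in G/G_0$, $A\subseteq M$ and $m\mapsto m\triangleleft\mathfrak{g}$ is injective on $A$. A right Følner net in $\mathcal{R}$ is a net $(F_i)_{i\in I}$ (over a directed set) of nonempty finite subsets of $M$ with $\lim_{i}\frac{|F_i\setminus\{m: m\triangleleft\mathfrak{g}\in F_i\}|}{|F_i|}=0$ for every $\mathfrak{g}\in G/G_0$. A semi-cellular automaton is $(\mathcal{R},Q,N,\delta)$ with $Q$ a set,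 $N\subseteq G/G_0$ with $G_0\cdot N\subseteq N$, $\delta\colon Q^N\to Q$; its global transition function is $\Delta\colon Q^M\to Q^M$, $\Delta(c)(m)=\delta(n\mapsto c(m\triangleleft n))$. For $A\subseteq M$, $\pi_A\colon Q^M\to Q^A$ is restriction. For $X\subseteq Q^M$ and a net $\mathcal{F}=(F_i)_{i\in I}$ of nonempty finite subsets of $M$, the entropy is $\mathrm{h}_{\mathcal{F}}(X)=\limsup_{i\in I}\frac{\log|\pi_{F_i}(X)|}{|F_i|}$. *)

From HB Require Import structures.
From mathcomp Require Import all_boot all_order all_algebra monoid.
From mathcomp Require Import finmap.
From mathcomp Require Import all_classical all_reals ereal exp.
Local Open Scope ereal_scope.
From Stdlib Require Import Rdefinitions.
From mathcomp Require Import Rstruct.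
Set Implicit Arguments. Unset Strict Implicit. Unset Printing Implicit Defensive.
Import Order.TTheory GRing.Theory Num.Theory.
Local Open Scope ring_scope.
Local Open Scope classical_set_scope.


(* A cell space: a group G acting transitively on the left on the nonempty
   set M via act, a point m0 and coordinates g_{m0,m} with g_{m0,m} |> m0 = m.
   (Transitivity follows from the existence of the family gsel; nonemptiness
   from m0.) *)
Record cell_space (G : groupType) (M : Type) := CellSpace {
  act : G -> M -> M;
  act1 : forall m, act 1%g m = m;
  actM : forall g h m, act (g * h)%g m = act g (act h m);
  act_transitive : forall m m', exists g, act g m = m';
  origin : M;
  coord : M -> G;
  coordP : forall m, act (coord m) origin = m
}.

Section CellSpaceDefs.
Context (G : groupType) (M : Type) (R : cell_space G M).

Definition stab : set G := [set g | act R g (origin R) = origin R].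

Definition lcoset (g : G) : set G := [set (g * h)%g | h in stab].

Definition coset_space := {A : set G | exists g, A = lcoset g}.

Definition coset_repr (A : coset_space) : G := projT1 (cid (proj2_sig A)).

Definition coset_lact (g : G) (A : set G) : set G := [set (g * a)%g | a in A].

Definition rsact (m : M) (A : coset_space) : M :=
  act R (coord R m * coset_repr A)%g (origin R).

End CellSpaceDefs.
Arguments rsact {G M} R m A.
Arguments coset_repr {G M} R A.

Definition right_amenable (G : groupType) (M : Type) (R : cell_space G M) : Prop :=
  exists mu : set M -> Rdefinitions.R,
    [/\ (forall A, (0 <= mu A)%R),
        mu setT = 1%R,
        (forall A B, A `&` B = set0 -> mu (A `|` B) = (mu A + mu B)%R) &
        (forall (g : coset_space R) (A : set M),
            {in A &, injective (fun m => rsact R m g)} ->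
            mu [set rsact R a g | a in A] = mu A)].

Definition directed (I : Type) (le : I -> I -> Prop) : Prop :=
  [/\ inhabited I,
      (forall i, le i i),
      (forall i j k, le i j -> le j k -> le i k) &
      (forall i j, exists k, le i k /\ le j k)].

Definition net_to_0 (I : Type) (le : I -> I -> Prop) (x : I -> Rdefinitions.R) : Prop :=
  forall eps : Rdefinitions.R, (0 < eps)%R ->
    exists i0, forall i, le i0 i -> (`|x i| < eps)%R.

Definition net_limsup (I : Type) (le : I -> I -> Prop) (x : I -> Rdefinitions.R)
  : \bar Rdefinitions.R :=
  ereal_inf [set ereal_sup [set (x j)%:E | j in [set j | le i j]] | i in setT].

Definition right_folner_net (G : groupType) (M : choiceType) (R : cell_space G M)
  (I : Type) (le : I -> I -> Prop) (F : I -> {fset M}) : Prop :=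
  directed le /\
  (forall i, F i != fset0%fset) /\
  (forall g : coset_space R,
     net_to_0 le (fun i =>
       (#|` [fset m in F i | rsact R m g \notin F i]%fset|%:R / #|` F i|%:R)%R)).

Definition global_transition (G : groupType) (M : Type) (R : cell_space G M)
  (Q : Type) (N : set (coset_space R)) (delta : ({n | N n} -> Q) -> Q)
  (c : M -> Q) : M -> Q :=
  fun m => delta (fun n => c (rsact R m (proj1_sig n))).

Definition stab_invariant (G : groupType) (M : Type) (R : cell_space G M)
  (N : set (coset_space R)) : Prop :=
  forall g n, stab R g -> N n ->
    exists n', N n' /\ proj1_sig n' = coset_lact g (proj1_sig n).

Definition restr_set (M : choiceType) (Q : finType) (F : {fset M})
  (X : set (M -> Q)) : {set {ffun F -> Q}} :=
  [set p : {ffun F -> Q} | `[< exists2 c, X c & p = [ffun x : F => c (fsval x)] >]].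

Definition entropy (M : choiceType) (Q : finType) (I : Type) (le : I -> I -> Prop)
  (F : I -> {fset M}) (X : set (M -> Q)) : \bar Rdefinitions.R :=
  net_limsup le (fun i =>
    (ln (#|restr_set (F i) X|%:R) / #|` F i|%:R)%R).

From HB Require Import structures.
From mathcomp Require Import all_boot all_order all_algebra monoid.
From mathcomp Require Import finmap.
From mathcomp Require Import all_classical all_reals ereal exp.
From Stdlib Require Import Rdefinitions.
From mathcomp Require Import Rstruct.
Set Implicit Arguments. Unset Strict Implicit. Unset Printing Implicit Defensive.
Import Order.TTheory GRing.Theory Num.Theory.
Local Open Scope ereal_scope.
Local Open Scope classical_set_scope.

(* Applying Delta can only create new patterns on F_i through the states just
   outside F_i that the neighbourhoods reach: these cells are the images of the
   points of F_i \ {m | m <| n in F_i}, n in N, so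
   |pi_{F_i}(Delta X)| <= |pi_{F_i}(X)| * |Q|^(sum_n |F_i \ {m | m <| n in F_i}|).
   Taking logarithms and dividing by |F_i|, the error term is ln|Q| times a finite
   sum of the Folner ratios, which tends to 0, so it disappears in the limsup. *)

Section Nets.
Local Open Scope ring_scope.
Variables (I : Type) (le : I -> I -> Prop).
Hypothesis le_directed : directed le.

Lemma net_to_0P (x : I -> Rdefinitions.R) :
  net_to_0 le x <-> forall eps, 0 < eps -> exists i0, forall i, le i0 i -> `|x i| < eps.
Proof.
by split=> h eps /RltP eps_gt0; have [i0 hi0] := h eps eps_gt0;
  exists i0 => i /hi0 /RltP.
Qed.

Lemma net_to_0_sum (T : Type) (s : seq T) (x : T -> I -> Rdefinitions.R) :
  (forall t, net_to_0 le (x t)) -> net_to_0 le (fun i => \sum_(t <- s) x t i).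
Proof.
have [[i1] _ le_trans' le_ub] := le_directed.
move=> hx; elim: s => [|t s IH]; apply/net_to_0P => eps eps_gt0.
  by exists i1 => i _; rewrite big_nil normr0.
have eps2_gt0 : 0 < eps / 2 by rewrite divr_gt0.
have [i2 hi2] := (net_to_0P _).1 IH _ eps2_gt0.
have [i3 hi3] := (net_to_0P _).1 (hx t) _ eps2_gt0.
have [k [le2k le3k]] := le_ub i2 i3.
exists k => i leki; rewrite big_cons (splitr eps).
apply: le_lt_trans (ler_normD _ _) _.
by apply: ltrD; [apply: hi3 | apply: hi2]; apply: le_trans' leki.
Qed.

Lemma net_to_0_scale (c : Rdefinitions.R) (x : I -> Rdefinitions.R) :
  net_to_0 le x -> net_to_0 le (fun i => c * x i).
Proof.
move=> /net_to_0P hx; apply/net_to_0P => eps eps_gt0.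
have c1_gt0 : 0 < `|c| + 1 by rewrite ltr_wpDl.
have [i0 hi0] := hx _ (divr_gt0 eps_gt0 c1_gt0).
exists i0 => i /hi0 hxi; rewrite normrM.
apply: le_lt_trans (_ : _ <= (`|c| + 1) * `|x i|) _.
  by rewrite ler_wpM2r // lerDl.
by rewrite mulrC -ltr_pdivlMr.
Qed.

Lemma net_limsup_le_add (a b e : I -> Rdefinitions.R) :
  (forall i, a i <= b i + e i) -> net_to_0 le e ->
  (net_limsup le a <= net_limsup le b)%E.
Proof.
have [_ _ le_trans' le_ub] := le_directed.
move=> hab /net_to_0P he; apply: le_ereal_inf_tmp => _ [i _ <-].
apply/lee_addgt0Pr => eps eps_gt0.
have [i0 hi0] := he eps eps_gt0; have [k [leik lei0k]] := le_ub i i0.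
apply: (@le_trans _ _ (ereal_sup [set (a j)%:E | j in [set j | le k j]])).
  by apply: ereal_inf_lbound; exists k.
apply: ge_ereal_sup => _ [j lekj <-].
have ab_eps : a j <= b j + eps.
  apply: le_trans (hab j) _; rewrite lerD2l.
  exact: le_trans (ler_norm _) (ltW (hi0 j (le_trans' _ _ _ lei0k lekj))).
rewrite -lee_fin EFinD in ab_eps; apply: le_trans ab_eps _; apply: leeD2r.
by apply: ereal_sup_ubound; exists j => //; apply: le_trans' leik lekj.
Qed.

End Nets.

Section Boundary.
Variables (G : groupType) (M : choiceType) (R : cell_space G M).

Definition escaping (F : {fset M}) (n : coset_space R) : {fset M} :=
  [fset m in F | rsact R m n \notin F]%fset.

Definition exterior_reach (F : {fset M}) (s : seq {classic coset_space R}) : {fset M} :=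
  (\bigcup_(n <- s) [fset rsact R m n | m in escaping F n])%fset.

Lemma card_exterior_reach_le F s :
  (#|` exterior_reach F s| <= \sum_(n <- s) #|` escaping F n|)%nat.
Proof.
rewrite /exterior_reach; elim: s => [|n s IH]; first by rewrite !big_nil cardfs0.
rewrite !big_cons; apply: leq_trans (leq_card_fsetU _ _).1 _.
by apply: leq_add => //; apply: leq_imfset_card.
Qed.

Lemma rsact_in_exterior_reach F (s : seq {classic coset_space R}) m n :
  m \in F -> n \in s -> rsact R m n \notin F -> rsact R m n \in exterior_reach F s.
Proof.
move=> mF + nF; rewrite /exterior_reach; elim: s => // n' s IH.
rewrite inE big_cons in_fsetU => /orP [/eqP <- | /IH ->]; last by rewrite orbT.
by apply/orP; left; apply/imfsetP; exists m; rewrite // !inE mF nF.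
Qed.

Variables (Q : finType) (N : set (coset_space R)) (delta : ({n | N n} -> Q) -> Q).

(* Delta(c) restricted to F only depends on c on F `|` D, so it is the image of
   the pair (c on F, c on D) under a local rule; [glue] rebuilds a configuration
   from such a pair, with the dummy state q0 outside F `|` D. *)
Lemma card_restr_global_transition_le (q0 : Q) (F D : {fset M}) (X : set (M -> Q)) :
  (forall m (n : {n | N n}), m \in F -> rsact R m (sval n) \notin F ->
     rsact R m (sval n) \in D) ->
  (#|restr_set F (global_transition delta @` X)| <= #|restr_set F X| * expn #|Q| #|` D|)%nat.
Proof.
move=> FD_nbhd.
pose glue (p : {ffun F -> Q}) (r : {ffun D -> Q}) (y : M) : Q :=
  if insub y is Some z then p z else if insub y is Some z then r z else q0.
pose local_rule (pr : {ffun F -> Q} * {ffun D -> Q}) : {ffun F -> Q} :=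
  [ffun x : F => delta (fun n => glue pr.1 pr.2 (rsact R (val x) (sval n)))].
have sub : restr_set F (global_transition delta @` X) \subset
    local_rule @: finset.setX (restr_set F X) [set: {ffun D -> Q}].
  apply/fintype.subsetP => p; rewrite inE => /asboolP [_ [c Xc <-] ->].
  apply/imsetP; exists ([ffun x : F => c (val x)], [ffun x : D => c (val x)]).
    by rewrite finset.in_setX finset.in_setT andbT inE; apply/asboolP; exists c.
  apply/ffunP => x; rewrite !ffunE /global_transition /=; congr delta.
  apply: funext => n; rewrite /glue; case: insubP => [z _ <-|notF].
    by rewrite ffunE.
  case: insubP => [z _ <-|]; first by rewrite ffunE.
  by rewrite FD_nbhd // fsvalP.
apply: leq_trans (subset_leq_card sub) _; apply: leq_trans (leq_imset_card _ _) _.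
by rewrite finset.cardsX finset.cardsT card_ffun -cardfE.
Qed.

End Boundary.

Section Logs.
Local Open Scope ring_scope.

Lemma ln_nat_ge0 (n : nat) : 0 <= ln (n%:R : Rdefinitions.R).
Proof. by case: n => [|n]; [rewrite ln0 | apply: ln_ge0; rewrite ler1n]. Qed.

Lemma ln_le_mul_expn (a b q S : nat) : (0 < q)%nat -> (a <= b * expn q S)%nat ->
  ln (a%:R : Rdefinitions.R) <= ln b%:R + S%:R * ln q%:R.
Proof.
move=> q_gt0; case: a => [|a] ab.
  by rewrite ln0 // addr_ge0 ?mulr_ge0 ?ln_nat_ge0.
have b_gt0 : (0 < b)%nat by case: b ab.
have qS_gt0 : (0 < expn q S)%nat by rewrite expn_gt0 q_gt0.
apply: le_trans (_ : _ <= ln (b * expn q S)%:R) _.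
  by rewrite ler_ln ?posrE ?ltr0n ?muln_gt0 ?b_gt0 // ler_nat.
by rewrite natrM lnM ?posrE ?ltr0n // natrX lnXn ?ltr0n // mulr_natl.
Qed.

End Logs.

Section FolnerDefect.
Local Open Scope ring_scope.
Variables (G : groupType) (M : choiceType) (R : cell_space G M).

Definition folner_defect (F : {fset M}) (s : seq {classic coset_space R}) : Rdefinitions.R :=
  \sum_(n <- s) #|` escaping F n|%:R / #|` F|%:R.

Lemma folner_defect_to_0 (I : Type) (le : I -> I -> Prop) (F : I -> {fset M}) s :
  right_folner_net R le F -> net_to_0 le (fun i => folner_defect (F i) s).
Proof. by move=> [le_directed [_ folner]]; apply: net_to_0_sum. Qed.

Lemma entropy_term_global_transition_le (Q : finType) (q0 : Q)
    (N : set (coset_space R)) (delta : ({n | N n} -> Q) -> Q)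
    (F : {fset M}) (s : seq {classic coset_space R}) (X : set (M -> Q)) :
  (forall n, N n -> n \in s) ->
  ln #|restr_set F (global_transition delta @` X)|%:R / #|` F|%:R <=
  ln #|restr_set F X|%:R / #|` F|%:R + ln #|Q|%:R * folner_defect F s.
Proof.
move=> Ns; have Q_gt0 : (0 < #|Q|)%nat by apply/card_gt0P; exists q0.
have card_le : (#|restr_set F (global_transition delta @` X)| <=
    #|restr_set F X| * expn #|Q| (\sum_(n <- s) #|` escaping F n|))%nat.
  apply: leq_trans (card_restr_global_transition_le delta q0 (D := exterior_reach F s) X _) _.
    by move=> m [n Nn] mF nmF; apply: rsact_in_exterior_reach => //; apply: Ns.
  by rewrite leq_mul2l leq_pexp2l ?card_exterior_reach_le ?orbT.
rewrite /folner_defect -mulr_suml -natr_sum mulrA -mulrDl ler_wpM2r // mulrC.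
exact: ln_le_mul_expn.
Qed.

End FolnerDefect.

Theorem theorem3
  (G : groupType) (M : choiceType) (R : cell_space G M)
  (hR : right_amenable R) (hG0 : finite_set (stab R))
  (Q : finType) (hQ : (0 < #|Q|)%nat)
  (N : set (coset_space R)) (hN : finite_set N) (hN0 : stab_invariant N)
  (delta : ({n | N n} -> Q) -> Q)
  (I : Type) (le : I -> I -> Prop) (F : I -> {fset M})
  (hF : right_folner_net R le F)
  (X : set (M -> Q)) :
  entropy le F (global_transition delta @` X) <= entropy le F X.
Proof.
have [q0 _] : exists q : Q, q \in Q by apply/card_gt0P.
have [s Ns] : exists s : seq {classic coset_space R}, forall n, N n -> n \in s.
  by move/(@finite_seqP {classic coset_space R}): hN => [s ->]; exists s.
have [le_directed _] := hF.
apply: (net_limsup_le_add le_directed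
  (fun i => entropy_term_global_transition_le q0 delta (F i) X Ns)).
exact/net_to_0_scale/folner_defect_to_0.
Qed.
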